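(* Let $r\ge 2$ and $x\ge 2$ be integers, let $G$ be a $K_r$-free graph on $x$ vertices, and let $\mathcal I$ denote the number of independent sets of $G$ (including the empty set). Then $$\log \mathcal I\;\ge\;\max\left(\frac{x^{1/r}}{2},\ \frac{\log^2 x}{18\log(2r)}\right).$$
   Context: A graph is $K_r$-free if it contains no $r$ pairwise adjacent vertices. Logarithms are base 2. *)

From mathcomp Require Import all_boot.
From Stdlib Require Import Reals.

Set Implicit Arguments.
Unset Strict Implicit.
Unset Printing Implicit Defensive.

Definition simple_graph (T : finType) (e : rel T) : Prop :=
  symmetric e /\ irreflexive e.

Definition is_clique (T : finType) (e : rel T) (S : {set T}) : bool :=
  [forall x in S, forall y in S, (x != y) ==> e x y].

Definition is_independent (T : finType) (e : rel T) (S : {set T}) : bool :=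
  [forall x in S, forall y in S, ~~ e x y].

Definition Kr_free (T : finType) (e : rel T) (r : nat) : Prop :=
  forall S : {set T}, #|S| = r -> ~~ is_clique e S.

Definition num_indep (T : finType) (e : rel T) : nat :=
  #|[set S : {set T} | is_independent e S]|.

Definition log2 (y : R) : R := (ln y / ln 2)%R.

(* Let I be the number of independent sets and alpha the independence number of
   a K_r-free graph on x vertices.

   Ramsey (Erdos-Szekeres): x < C(r - 1 + alpha, r - 1) <= (alpha + 1)^(r-1),
   so alpha >= x^(1/r) / 2, and the 2^alpha subsets of a maximum independent
   set are independent.

   Supersaturation: every set of R = C(r - 1 + t, r - 1) <= r^t vertices
   contains an independent (t+1)-set, so averaging over the R-subsets gives at
   least C(x, t+1) / C(R, t+1) >= (x / R)^(t+1) independent (t+1)-sets.  With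
   t = floor(log x / (2 log 2r)) we have R <= sqrt x, hence
   log I >= (t + 1) log x / 2 >= log^2 x / (4 log 2r). *)

From mathcomp Require Import all_boot.
From Stdlib Require Import Reals Lra Lia ZArith.
(* Re-importing ssrnat makes [^] on nat denote [expn] again, not [Nat.pow]. *)
From mathcomp Require Import zify ssrnat.

Set Implicit Arguments.
Unset Strict Implicit.
Unset Printing Implicit Defensive.

Lemma leq_bin_expl a b : 'C(a + b, a) <= b.+1 ^ a.
Proof.
elim: a => [|a IHa]; first by rewrite bin0.
rewrite -(leq_pmul2l (ltn0Sn a)) -mul_bin_diag addSn /= expnS mulnA.
by rewrite leq_mul //; nia.
Qed.

Lemma leq_bin_expr a b : 'C(a + b, a) <= a.+1 ^ b.
Proof. by rewrite -bin_sub ?leq_addr // addKn addnC leq_bin_expl. Qed.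

Lemma ltn_bin_add a b : 0 < a -> b < 'C(a + b, a).
Proof.
case: a => // a _; elim: a => [|a IHa]; first by rewrite bin1 add1n.
by rewrite addSn binS; lia.
Qed.

Lemma leq_bin_ratio m n k : m <= n -> 'C(m, k) * n ^ k <= 'C(n, k) * m ^ k.
Proof.
move=> le_mn; elim: k => [|k IHk]; first by rewrite !bin0.
rewrite -(leq_pmul2l (ltn0Sn k)) !mulnA !mul_bin_left !expnS.
have le_step : (m - k) * n <= (n - k) * m.
  by rewrite !mulnBl mulnC leq_sub2l // leq_mul.
by rewrite mulnACA [leqRHS]mulnACA leq_mul.
Qed.

Section Supersaturation.

Variables (T : finType) (P : pred {set T}) (k : nat).

Definition ksubsets (U : {set T}) : {set {set T}} :=
  [set A : {set T} | [&& A \subset U, #|A| == k & P A]].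

Lemma card_ksubsets_setD1 (U : {set T}) v :
  #|ksubsets (U :\ v)| = \sum_(A in ksubsets U) (v \notin A).
Proof.
rewrite -sum1_card big_mkcond [RHS]big_mkcond /=; apply: eq_bigr => A _.
by rewrite !inE subsetD1; case: (v \in A); rewrite ?andbF ?andbT; case: ifP.
Qed.

Lemma sum_card_ksubsets_setD1 (U : {set T}) :
  \sum_(v in U) #|ksubsets (U :\ v)| = (#|U| - k) * #|ksubsets U|.
Proof.
under eq_bigr => v _ do rewrite card_ksubsets_setD1.
rewrite exchange_big /= -[#|ksubsets U|]sum1_card big_distrr /=.
apply: eq_bigr => A; rewrite inE => /and3P[sAU /eqP <- _].
have -> : #|U| - #|A| = #|U :\: A| by rewrite cardsD (setIidPr sAU).
rewrite muln1 -sum1_card big_mkcond [RHS]big_mkcond /=; apply: eq_bigr => v _.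
by rewrite !inE; case: (v \in U); case: (v \in A).
Qed.

Variable m : nat.
Hypothesis leq_k_m : k <= m.
Hypothesis ksubsets_gt0 : forall U : {set T}, #|U| = m -> 0 < #|ksubsets U|.

Lemma supersaturation (U : {set T}) :
  m <= #|U| -> 'C(#|U|, k) <= #|ksubsets U| * 'C(m, k).
Proof.
move/subnK; move: (#|U| - m) => n; elim: n U => [|n IHn] U cardU.
  by rewrite -cardU add0n leq_pmull // ksubsets_gt0.
have k_lt_U : 0 < #|U| - k by lia.
rewrite -(leq_pmul2l k_lt_U) -mul_bin_down mulnA -sum_card_ksubsets_setD1.
rewrite big_distrl -sum_nat_const /=; apply: leq_sum => v vU.
have cardUv : #|U :\ v| = #|U|.-1 by rewrite (cardsD1 v U) vU.
by rewrite -cardUv IHn // cardUv -cardU.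
Qed.

End Supersaturation.

Section Ramsey.

Variables (T : finType) (e : rel T).
Hypotheses (e_sym : symmetric e) (e_irr : irreflexive e).

Definition nbhd (v : T) : {set T} := [set w | e v w].

Definition no_clique_in (r : nat) (U : {set T}) :=
  forall S : {set T}, S \subset U -> #|S| = r -> ~~ is_clique e S.

Definition no_indep_in (t : nat) (U : {set T}) :=
  forall S : {set T}, S \subset U -> #|S| = t -> ~~ is_independent e S.

Lemma is_clique1 v : is_clique e [set v].
Proof. by apply/forall_inP=> a /set1P-> ; apply/forall_inP=> b /set1P->; rewrite eqxx. Qed.

Lemma is_independent1 v : is_independent e [set v].
Proof. by apply/forall_inP=> a /set1P-> ; apply/forall_inP=> b /set1P->; rewrite e_irr. Qed.

Lemma is_independent0 : is_independent e set0.
Proof. by apply/forall_inP=> a; rewrite inE. Qed.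

Lemma is_independentS (A B : {set T}) :
  A \subset B -> is_independent e B -> is_independent e A.
Proof.
move=> /subsetP sAB /forall_inP indB; apply/forall_inP=> a /sAB aB.
by apply/forall_inP=> b /sAB bB; move/forall_inP: (indB a aB); apply.
Qed.

Lemma is_cliqueU1 v (S : {set T}) :
  S \subset nbhd v -> is_clique e S -> is_clique e (v |: S).
Proof.
move=> /subsetP sSv /forall_inP clS.
apply/forall_inP=> a /setU1P[->|aS]; apply/forall_inP=> b /setU1P[->|bS];
  apply/implyP=> neq_ab.
- by rewrite eqxx in neq_ab.
- by have := sSv b bS; rewrite inE.
- by rewrite e_sym; have := sSv a aS; rewrite inE.
- by move/forall_inP: (clS a aS) => /(_ b bS) /implyP; apply.
Qed.

Lemma is_independentU1 v (S : {set T}) :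
  [disjoint S & nbhd v] -> is_independent e S -> is_independent e (v |: S).
Proof.
move=> dSv /forall_inP indS.
apply/forall_inP=> a /setU1P[->|aS]; apply/forall_inP=> b /setU1P[->|bS].
- by rewrite e_irr.
- by have := disjointFr dSv bS; rewrite inE => ->.
- by rewrite e_sym; have := disjointFr dSv aS; rewrite inE => ->.
- by move/forall_inP: (indS a aS); apply.
Qed.

Lemma no_clique_inS r (U V : {set T}) :
  U \subset V -> no_clique_in r V -> no_clique_in r U.
Proof. by move=> sUV noV S sSU; apply: noV (subset_trans sSU sUV). Qed.

Lemma no_indep_inS t (U V : {set T}) :
  U \subset V -> no_indep_in t V -> no_indep_in t U.
Proof. by move=> sUV noV S sSU; apply: noV (subset_trans sSU sUV). Qed.

Lemma no_clique_in1 U : no_clique_in 1 U -> U = set0.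
Proof.
move=> noU; case: (set_0Vmem U) => [//|[v vU]].
by have := noU [set v]; rewrite sub1set vU cards1 is_clique1 => /(_ isT erefl).
Qed.

Lemma no_indep_in1 U : no_indep_in 1 U -> U = set0.
Proof.
move=> noU; case: (set_0Vmem U) => [//|[v vU]].
by have := noU [set v]; rewrite sub1set vU cards1 is_independent1 => /(_ isT erefl).
Qed.

Lemma no_clique_in_nbhd r (U : {set T}) v :
  v \in U -> no_clique_in r.+1 U -> no_clique_in r ((U :\ v) :&: nbhd v).
Proof.
move=> vU noU S; rewrite subsetI subsetD1 -andbA => /and3P[sSU vNS sSv] cardS.
have sSvU : v |: S \subset U by rewrite subUset sub1set vU.
have cardSv : #|v |: S| = r.+1 by rewrite cardsU1 vNS cardS.
exact: contraNN (is_cliqueU1 sSv) (noU _ sSvU cardSv).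
Qed.

Lemma no_indep_in_non_nbhd t (U : {set T}) v :
  v \in U -> no_indep_in t.+1 U -> no_indep_in t ((U :\ v) :\: nbhd v).
Proof.
move=> vU noU S; rewrite subsetD subsetD1 -andbA => /and3P[sSU vNS dSv] cardS.
have sSvU : v |: S \subset U by rewrite subUset sub1set vU.
have cardSv : #|v |: S| = t.+1 by rewrite cardsU1 vNS cardS.
exact: contraNN (is_independentU1 dSv) (noU _ sSvU cardSv).
Qed.

Lemma ramsey_bin a b (U : {set T}) :
  no_clique_in a.+1 U -> no_indep_in b.+1 U -> #|U| < 'C(a + b, a).
Proof.
elim: a b U => [|a IHa] b U; first by move=> /no_clique_in1->; rewrite cards0 bin0.
elim: b U => [|b IHb] U noKU noIU.
  by rewrite (no_indep_in1 noIU) cards0 addn0 binn.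
case: (set_0Vmem U) => [->|[v vU]]; first by rewrite cards0 bin_gt0 leq_addr.
have sU : U :\ v \subset U by apply: subD1set.
have ltN := IHa b.+1 _ (no_clique_in_nbhd vU noKU)
  (no_indep_inS (subset_trans (subsetIl _ _) sU) noIU).
have ltM := IHb _ (no_clique_inS (subset_trans (subsetDl _ _) sU) noKU)
  (no_indep_in_non_nbhd vU noIU).
rewrite addSnnS in ltM; rewrite addSn binS (cardsD1 v U) vU.
by rewrite -(cardsID (nbhd v) (U :\ v)); lia.
Qed.

End Ramsey.

Section IndependentSets.

Variables (T : finType) (e : rel T) (r : nat).
Hypotheses (e_sym : symmetric e) (e_irr : irreflexive e) (e_Kr_free : Kr_free e r.+1).

Let no_clique_T : no_clique_in e r.+1 [set: T].
Proof. by move=> S _; apply: e_Kr_free. Qed.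

Lemma card_ksubsets_indep_le k (U : {set T}) :
  #|ksubsets (is_independent e) k U| <= num_indep e.
Proof. by apply: subset_leq_card; apply/subsetP=> A; rewrite !inE => /and3P[]. Qed.

Lemma ksubsets_indep_gt0 t (U : {set T}) :
  #|U| = 'C(r + t, r) -> 0 < #|ksubsets (is_independent e) t.+1 U|.
Proof.
move=> cardU; rewrite card_gt0; apply: contraT; rewrite negbK => /eqP noI.
suff : #|U| < 'C(r + t, r) by rewrite cardU ltnn.
apply: (ramsey_bin e_sym e_irr (no_clique_inS (subsetT U) no_clique_T)).
move=> S sSU cardS; apply/negP=> indS.
by have := in_set0 S; rewrite -noI inE sSU cardS eqxx indS.
Qed.

Lemma num_indep_lower_bound t : 0 < r -> r.+1 ^ t <= #|T| ->
  #|T| ^ t.+1 <= num_indep e * (r.+1 ^ t) ^ t.+1.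
Proof.
move=> r_gt0 le_rt_T.
have le_R_rt := leq_bin_expr r t.
have lt_t_R := ltn_bin_add t r_gt0.
have le_R_T := leq_trans le_R_rt le_rt_T.
have := supersaturation lt_t_R (@ksubsets_indep_gt0 t) (U := [set: T]).
rewrite cardsT => /(_ le_R_T) super.
have bin_gt0 : 0 < 'C('C(r + t, r), t.+1) by rewrite bin_gt0.
rewrite -(leq_pmul2l bin_gt0); apply: leq_trans (leq_bin_ratio t.+1 le_R_T) _.
rewrite mulnCA mulnA leq_mul ?leq_exp2r //.
by apply: leq_trans super _; rewrite leq_mul ?card_ksubsets_indep_le.
Qed.

Definition indep_number := \max_(S : {set T} | is_independent e S) #|S|.

Lemma leq_card_indep_number S : is_independent e S -> #|S| <= indep_number.
Proof. exact: leq_bigmax_cond. Qed.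

Lemma indep_number_attained :
  exists2 S, is_independent e S & #|S| = indep_number.
Proof.
have [|S indS maxS] := @eq_bigmax_cond _ (is_independent e) (fun S => #|S|).
  by apply/card_gt0P; exists set0; apply: is_independent0.
by exists S; last exact: esym maxS.
Qed.

Lemma exp2_indep_number_le : 2 ^ indep_number <= num_indep e.
Proof.
have [S indS <-] := indep_number_attained; rewrite -card_powerset.
by apply: subset_leq_card; apply/subsetP=> A; rewrite !inE => /is_independentS; apply.
Qed.

Lemma indep_number_gt0 : 0 < #|T| -> 0 < indep_number.
Proof.
case/card_gt0P=> v _; apply: leq_trans (leq_card_indep_number (is_independent1 e_irr v)).
by rewrite cards1.
Qed.

Lemma card_le_exp_indep_number : 0 < #|T| -> #|T| <= (2 * indep_number) ^ r.
Proof.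
move=> T_gt0; have lt_T_bin : #|T| < 'C(r + indep_number, r).
  rewrite -cardsT; apply: (ramsey_bin e_sym e_irr no_clique_T).
  move=> S _ cardS; apply: contraNN (@leq_card_indep_number S) _.
  by rewrite cardS ltnn.
apply: leq_trans (ltnW (leq_trans lt_T_bin (leq_bin_expl _ _))) _.
have [->|r_gt0] := posnP r; first by rewrite !expn0.
by rewrite leq_exp2r //; have := indep_number_gt0 T_gt0; lia.
Qed.

End IndependentSets.

Lemma INR_expn m n : INR (m ^ n) = (INR m ^ n)%R.
Proof. by elim: n => [|n IHn] //; rewrite expnS -multE mult_INR IHn. Qed.

Lemma leq_INR m n : m <= n -> (INR m <= INR n)%R.
Proof. by move/leP/le_INR. Qed.

Section RealBounds.

Local Open Scope R_scope.

Lemma exists_nat_floor y : 0 <= y -> exists n : nat, INR n <= y < INR n + 1.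
Proof.
move=> y_ge0; have [lo hi] := Zfloor_bound y.
have floor_ge0 : (0 <= Zfloor y)%Z by apply: Zfloor_lub.
by exists (Z.to_nat (Zfloor y)); rewrite INR_IZR_INZ Z2Nat.id.
Qed.

Lemma log2_1 : log2 1 = 0.
Proof. by rewrite /log2 ln_1 /Rdiv Rmult_0_l. Qed.

Lemma log2_2 : log2 2 = 1.
Proof. by rewrite /log2 /Rdiv Rinv_r //; have := ln_lt_2; lra. Qed.

Lemma log2_mult a b : 0 < a -> 0 < b -> log2 (a * b) = log2 a + log2 b.
Proof. by move=> a_gt0 b_gt0; rewrite /log2 ln_mult // /Rdiv Rmult_plus_distr_r. Qed.

Lemma log2_pow a n : 0 < a -> log2 (a ^ n) = INR n * log2 a.
Proof. by move=> a_gt0; rewrite /log2 ln_pow // /Rdiv Rmult_assoc. Qed.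

Lemma log2_lt a b : 0 < a -> a < b -> log2 a < log2 b.
Proof.
move=> a_gt0 lt_ab; apply: Rmult_lt_compat_r; last exact: ln_increasing.
by apply: Rinv_0_lt_compat; have := ln_lt_2; lra.
Qed.

Lemma log2_le a b : 0 < a -> a <= b -> log2 a <= log2 b.
Proof. by move=> a_gt0 [lt_ab|<-]; [apply/Rlt_le/log2_lt | apply: Rle_refl]. Qed.

Lemma log2_le_inv a b : 0 < b -> log2 a <= log2 b -> a <= b.
Proof. by move=> b_gt0 le_ab; apply: Rnot_lt_le => /(log2_lt b_gt0); lra. Qed.

Lemma Rpower_root_le x y n :
  0 < x -> 0 < y -> x <= y ^ n.+1 -> Rpower x (1 / INR n.+1) <= y.
Proof.
move=> x_gt0 y_gt0 le_xy; have n_gt0 : 0 < INR n.+1 by apply: lt_0_INR; lia.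
apply: Rle_trans (Rle_Rpower_l x (y ^ n.+1) (1 / INR n.+1) _ (conj x_gt0 le_xy)) _.
  by apply/Rlt_le/Rdiv_lt_0_compat; lra.
rewrite -Rpower_pow // Rpower_mult /Rdiv Rmult_1_l Rinv_r ?Rpower_1; lra.
Qed.

Lemma le_log2_of_pow2_le (a n : nat) : (2 ^ a <= n)%N -> INR a <= log2 (INR n).
Proof.
move=> /leq_INR; rewrite INR_expn => le_an.
rewrite -[INR a]Rmult_1_r -log2_2 -log2_pow; last lra.
by apply: log2_le le_an; apply: pow_lt; simpl; lra.
Qed.

Lemma sq_log2_le x r N : 1 <= x -> 1 <= r ->
  (forall t : nat, r ^ t <= x -> x ^ t.+1 <= N * (r ^ t) ^ t.+1) ->
  log2 x ^ 2 / (18 * log2 (2 * r)) <= log2 N.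
Proof.
move=> x_ge1 r_ge1 bound.
have N_ge1 : 1 <= N by have := bound 0%nat; rewrite /= !Rmult_1_r; lra.
have L_ge0 : 0 <= log2 x by rewrite -log2_1; apply: log2_le; lra.
have lr_ge0 : 0 <= log2 r by rewrite -log2_1; apply: log2_le; lra.
have c_eq : log2 (2 * r) = 1 + log2 r by rewrite log2_mult ?log2_2; lra.
set L := log2 x in L_ge0 *; set c := log2 (2 * r) in c_eq *.
have [t [t_le t_gt]] : exists t : nat, INR t <= L / (2 * c) < INR t + 1.
  by apply: exists_nat_floor; apply: Rmult_le_pos; [|apply/Rlt_le/Rinv_0_lt_compat]; lra.
have t_ge0 := pos_INR t.
have tc_le : INR t * c <= L / 2.
  have := Rmult_le_compat_r (2 * c) _ _ (ltac:(lra)) t_le.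
  rewrite /Rdiv Rmult_assoc Rinv_l; lra.
have rt_le_x : r ^ t <= x.
  apply: log2_le_inv; first lra.
  rewrite log2_pow -/L; last lra.
  rewrite c_eq in tc_le; nra.
have rt_gt0 : 0 < r ^ t by apply: pow_lt; lra.
have xt_gt0 : 0 < x ^ t.+1 by apply: pow_lt; lra.
move: (log2_le xt_gt0 (bound t rt_le_x)).
rewrite log2_mult ?log2_pow -/L; try lra; last by apply: pow_lt.
have tlr_le : INR t * log2 r <= L / 2 by rewrite c_eq in tc_le; nra.
have -> : L ^ 2 / (18 * c) = L * (L / (2 * c)) / 9 by field; lra.
by move: t_gt; rewrite S_INR; nra.
Qed.

End RealBounds.

Section MainBounds.

Variables (T : finType) (e : rel T) (r : nat).
Hypotheses (e_sym : symmetric e) (e_irr : irreflexive e) (e_Kr_free : Kr_free e r.+1).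
Hypothesis T_gt0 : 0 < #|T|.

Local Open Scope R_scope.

Lemma root_le_log2_num_indep :
  Rpower (INR #|T|) (1 / INR r.+1) / 2 <= log2 (INR (num_indep e)).
Proof.
have alpha_gt0 := indep_number_gt0 e_irr T_gt0.
have le_T_alpha : (#|T| <= (2 * indep_number e) ^ r.+1)%N.
  apply: leq_trans (card_le_exp_indep_number e_sym e_irr e_Kr_free T_gt0) _.
  by apply: leq_pexp2l; rewrite ?muln_gt0.
have root_le : Rpower (INR #|T|) (1 / INR r.+1) <= 2 * INR (indep_number e).
  apply: Rpower_root_le.
  - by apply: lt_0_INR; apply/ltP.
  - by apply: Rmult_lt_0_compat; [lra | apply: lt_0_INR; apply/ltP].
  - by rewrite -[2]/(INR 2) -mult_INR -INR_expn; apply: leq_INR.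
have := le_log2_of_pow2_le (exp2_indep_number_le e).
lra.
Qed.

Lemma sq_log2_le_log2_num_indep : (0 < r)%N ->
  log2 (INR #|T|) ^ 2 / (18 * log2 (2 * INR r.+1)) <= log2 (INR (num_indep e)).
Proof.
move=> r_gt0; apply: sq_log2_le; [exact: leq_INR T_gt0 | exact: leq_INR (ltn0Sn r) |].
move=> t; rewrite -INR_expn => /INR_le/leP le_rt_T.
rewrite -!INR_expn -mult_INR; apply: leq_INR.
exact: num_indep_lower_bound.
Qed.

End MainBounds.

Theorem mainTheorem3 (r x : nat) (T : finType) (e : rel T) :
  (2 <= r)%N -> (2 <= x)%N -> #|T| = x ->
  simple_graph e -> Kr_free e r ->
  (Rmax (Rpower (INR x) (1 / INR r) / 2)
        (log2 (INR x) ^ 2 / (18 * log2 (2 * INR r)))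
   <= log2 (INR (num_indep e)))%R.
Proof.
move=> r_ge2 x_ge2 cardT [e_sym e_irr]; subst x.
case: r r_ge2 => // r r_gt0 e_Kr_free.
have T_gt0 : (0 < #|T|)%N := ltnW x_ge2.
apply: Rmax_lub.
- exact: root_le_log2_num_indep.
- exact: sq_log2_le_log2_num_indep.
Qed.
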